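(* Fix $\delta>0$ and an integer $d\ge0$. Let $K(s)$, $s\in B^d(1)$, be a continuous family of links transverse to $\xi_0$ in $\mathbb{R}^3$ such that $K(s)\subset B(\delta)$ for all $s\in\partial B^d(1)$. Then there is a homotopy $K(s,t)$, $0\le t\le1$, through transverse links, with $K(s,t)=K(s)$ for $s\in\partial B^d(1)$, $K(s,0)=K(s)$ and $K(s,1)\subset B(\delta)$ for every $s\in B^d(1)$. In particular, the space of transverse links in $\mathbb{R}^3$ is weakly homotopy equivalent to the space of transverse links contained in $B(\delta)$.
   Context: $\xi_0=\ker(dx_3-x_2\,dx_1+x_1\,dx_2)$ on $\mathbb{R}^3$; a link is transverse if it is everywhere transverse to $\xi_0$. $B^d(r)$ denotes the closed $d$-dimensional ball of radius $r$ about the origin and $B(r)=B^3(r)\subset\mathbb{R}^3$. *)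

From HB Require Import structures.
From mathcomp Require Import all_boot all_order all_algebra.
From mathcomp Require Import all_classical all_reals all_analysis.
Set Implicit Arguments. Unset Strict Implicit. Unset Printing Implicit Defensive.
Import Order.TTheory GRing.Theory Num.Theory.
Import numFieldNormedType.Exports.
Local Open Scope classical_set_scope.
Local Open Scope ring_scope.

Section Links.
Variable R : realType.

(* A parametrized link with n components: component i, coordinate c (x1,x2,x3
   for c = 0,1,2), parameter theta in R (1-periodic). *)
Definition plink (n : nat) := 'I_n -> 'I_3 -> R -> R.

Definition smooth_fun (f : R -> R) : Prop :=
  forall (k : nat) (x : R), derivable (derive1n k f) x 1.

Definition periodic1 (f : R -> R) : Prop := forall t, f (t + 1) = f t.

Definition is_link n (K : plink n) : Prop :=
  (forall i c, smooth_fun (K i c) /\ periodic1 (K i c)) /\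
  (forall i j t u, 0 <= t < 1 -> 0 <= u < 1 ->
     (forall c, K i c t = K j c u) -> i = j /\ t = u) /\
  (forall i t, exists c, derive1 (K i c) t != 0).

(* the contact form dx3 - x2 dx1 + x1 dx2 evaluated on the velocity *)
Definition alpha0_vel n (K : plink n) (i : 'I_n) (t : R) : R :=
  derive1 (K i 2%:R) t - K i 1%:R t * derive1 (K i 0%:R) t
    + K i 0%:R t * derive1 (K i 1%:R) t.

Definition transverse_link n (K : plink n) : Prop :=
  is_link K /\ forall i t, alpha0_vel K i t != 0.

Definition link_in_ball n (delta : R) (K : plink n) : Prop :=
  forall i t, K i 0%:R t ^+ 2 + K i 1%:R t ^+ 2 + K i 2%:R t ^+ 2 <= delta ^+ 2.

(* continuity of a family of links in the C^infty topology:
   every theta-derivative is jointly continuous in (parameter, theta) *)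
Definition cont_family n (P : topologicalType) (A : set P)
  (F : P -> plink n) : Prop :=
  forall (k : nat) i c,
    {within A `*` setT, continuous (fun p : P * R => derive1n k (F p.1 i c) p.2)}.

Definition sqnorm d (s : 'rV[R]_d) : R := \sum_(j < d) s ord0 j ^+ 2.
Definition unit_ball (d : nat) : set 'rV[R]_d := [set s | sqnorm s <= 1].
Definition unit_sphere (d : nat) : set 'rV[R]_d := [set s | sqnorm s = 1].

End Links.
Arguments unit_ball {R} d _.
Arguments unit_sphere {R} d _.

From HB Require Import structures.
From mathcomp Require Import all_boot all_order all_algebra.
From mathcomp Require Import all_classical all_reals all_analysis.
From mathcomp Require Import ring lra.
Import Order.TTheory GRing.Theory Num.Theory.
Import numFieldNormedType.Exports.
Set Implicit Arguments. Unset Strict Implicit. Unset Printing Implicit Defensive.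
Local Open Scope classical_set_scope.
Local Open Scope ring_scope.

(* The contact dilations (x1, x2, x3) |-> (m x1, m x2, m^2 x3), m > 0, preserve
   xi0 (they multiply dx3 - x2 dx1 + x1 dx2 by m^2), hence map transverse links
   to transverse links.  Let M(s) be the maximum of |x|^2 over K(s); it depends
   continuously on s, by compactness of the circle.  With
   lambda(s) = delta^2 / max(M(s), delta^2) in (0, 1], dilate K(s) by
   1 - t (1 - lambda(s)).  At t = 1 every point moves to squared norm at most
   lambda(s) |x|^2 <= lambda(s) M(s) <= delta^2, and on the sphere M(s) <= delta^2
   forces lambda(s) = 1, so the homotopy is constant there. *)

Section WithinContinuity.
Variables (X Y Z : topologicalType) (A : set X) (B : set Y).

Lemma continuous_comp_within (phi : X -> Y) (f : Y -> Z) :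
  continuous phi -> (forall x, A x -> B (phi x)) -> {within B, continuous f} ->
  {within A, continuous (f \o phi)}.
Proof.
move=> phi_cont AB /subspace_continuousP f_cont.
apply/subspace_continuousP => x Ax.
have phi_within : phi @ within A (nbhs x) --> within B (nbhs (phi x)).
  move=> W B_W; have : nbhs x (fun z => B (phi z) -> W (phi z)).
    exact: (phi_cont x (fun y => B y -> W y)).
  rewrite /within /= !nbhs_simpl; apply: filterS => z BW Az.
  exact/BW/AB.
exact: cvg_comp phi_within (f_cont _ (AB _ Ax)).
Qed.

Lemma continuous_fst (T : topologicalType) : continuous (@fst X T).
Proof. by move=> p; exact: cvg_fst. Qed.

Lemma continuous_pair_cst (x : X) : continuous (fun y : Y => (x, y)).
Proof.
move=> y; apply: (@cvg_pair _ _ _ _ (nbhs x) (nbhs y)); [exact: cvg_cst | exact: cvg_id].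
Qed.

Lemma continuous_map_fst (T : topologicalType) (phi : X -> Y) :
  continuous phi -> continuous (fun p : X * T => (phi p.1, p.2)).
Proof.
move=> phi_cont p; apply: (@cvg_pair _ _ _ _ (nbhs (phi p.1)) (nbhs p.2)).
  exact: continuous_comp (@cvg_fst _ _ _ _ _) (phi_cont p.1).
exact: cvg_snd.
Qed.

Lemma near_withinXT_split (x : X) (y : Y) (Q : X * Y -> Prop) :
  (\forall q \near within (A `*` setT) (nbhs (x, y)), Q q) ->
  \forall t \near y & s \near within A (nbhs x), Q (s, t).
Proof.
move=> [[U V] [/= U_x V_y] UV_Q]; exists (V, fun s => U s /\ A s) => /=.
  by split => //; apply: filterS U_x.
by move=> [t s] [/= Vt [Us As]]; exact: (UV_Q (s, t)).
Qed.

Lemma near_withinXT_fiber (x : X) (y : Y) (Q : X * Y -> Prop) :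
  (\forall q \near within (A `*` setT) (nbhs (x, y)), Q q) ->
  \forall s \near within A (nbhs x), Q (s, y).
Proof.
move=> [[U V] [/= U_x V_y] UV_Q]; apply: filterS U_x => s Us As.
by apply: (UV_Q (s, y)) => //; split => //; exact: nbhs_singleton.
Qed.

End WithinContinuity.

Section SegmentSup.
Variables (R : realType) (P : topologicalType) (A : set P) (J : finType).
Variable g : J -> P -> R -> R.
Hypothesis g_cont :
  forall i, {within A `*` setT, continuous (fun p : P * R => g i p.1 p.2)}.

(* [0] belongs to the set so that it is nonempty even when [J] is empty. *)
Definition segment_values (s : P) : set R :=
  [set x | x = 0 \/ exists i t, 0 <= t <= 1 /\ x = g i s t].

Definition segment_sup (s : P) : R := sup (segment_values s).

Lemma fiber_continuous i s : A s -> {within `[0, 1], continuous (g i s)}.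
Proof.
move=> As; apply: (continuous_comp_within (@continuous_pair_cst _ R s)
  (fun t (_ : `[0, 1]%classic t) => conj As Logic.I) (@g_cont i)).
Qed.

Lemma segment_values_ubound s : A s -> has_ubound (segment_values s).
Proof.
move=> As.
have [c c_max] : exists c : J -> R, forall i t, 0 <= t <= 1 -> g i s t <= c i.
  suff /choice [c cP] : forall i, exists b, forall t, 0 <= t <= 1 -> g i s t <= b.
    by exists c.
  move=> i; have [t _ t_max] := EVT_max ler01 (@fiber_continuous i s As).
  by exists (g i s t) => u u01; apply: t_max; rewrite in_itv.
exists (\sum_i `|c i|) => _ [->|[i [t [t01 ->]]]].
  by apply: sumr_ge0 => j _; exact: normr_ge0.
apply: le_trans (c_max i t t01) (le_trans (ler_norm _) _).
by rewrite (bigD1 i) //= lerDl; apply: sumr_ge0 => j _; exact: normr_ge0.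
Qed.

Lemma segment_values_has_sup s : A s -> has_sup (segment_values s).
Proof. by move=> As; split; [exists 0; left | exact: segment_values_ubound]. Qed.

Lemma segment_sup_ge0 s : A s -> 0 <= segment_sup s.
Proof. by move=> As; apply: sup_upper_bound; [exact: segment_values_has_sup | left]. Qed.

Lemma le_segment_sup s i t : A s -> 0 <= t <= 1 -> g i s t <= segment_sup s.
Proof.
move=> As t01; apply: sup_upper_bound; first exact: segment_values_has_sup.
by right; exists i, t.
Qed.

Lemma segment_sup_le s b : 0 <= b ->
  (forall i t, 0 <= t <= 1 -> g i s t <= b) -> segment_sup s <= b.
Proof.
move=> b0 gb; apply: ge_sup; first by exists 0; left.
by move=> _ [->|[i [t [t01 ->]]]]; [exact: b0 | exact: gb].
Qed.

(* Compactness of [0, 1] makes the pointwise bounds uniform in [t]. *)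
Lemma segment_sup_near_le s0 e : A s0 -> 0 < e ->
  \forall s \near within A (nbhs s0), segment_sup s <= segment_sup s0 + e.
Proof.
move=> As0 e0.
have : \forall s \near within A (nbhs s0),
    `[0, 1] `<=` (fun t => forall i, g i s t < segment_sup s0 + e).
  apply: (proj1 (compact_near_coveringP _) (@segment_compact R 0 1)) => t t01.
  apply: (@near_withinXT_split _ _ _ s0 t
    (fun q => forall i, g i q.1 q.2 < segment_sup s0 + e)).
  apply: filter_forall => i.
  have /subspace_continuousP /(_ (s0, t) (conj As0 Logic.I)) := @g_cont i.
  move=> /cvgrPdist_lt /(_ _ e0); apply: filterS => q /=.
  rewrite ltr_distlC => /andP [_ lt_g]; apply: lt_le_trans lt_g _.
  by rewrite lerD2r le_segment_sup //; move: t01 => /=; rewrite in_itv.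
apply: filterS => s g_lt; apply: segment_sup_le.
  by rewrite addr_ge0 ?segment_sup_ge0 ?ltW.
by move=> i t t01; apply/ltW/g_lt; rewrite /= in_itv.
Qed.

Lemma segment_sup_near_gt s0 e : A s0 -> 0 < e ->
  \forall s \near within A (nbhs s0), segment_sup s0 - e < segment_sup s.
Proof.
move=> As0 e0; have e20 : 0 < e / 2 by rewrite divr_gt0.
have sup_gt' : segment_sup s0 - e / 2 < segment_sup s0 by rewrite gtrBl.
have [y [->|[i [t [t01 ->]]]] y_gt] :=
  sup_gt (ex_intro _ 0 (or_introl erefl)) sup_gt'.
  apply: filterS (withinT _ _) => s As.
  by apply: lt_le_trans (segment_sup_ge0 As); lra.
have /subspace_continuousP /(_ (s0, t) (conj As0 Logic.I)) := @g_cont i.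
move=> /cvgrPdist_lt /(_ _ e20) /near_withinXT_fiber.
apply: filterS2 (withinT _ _) => s As.
rewrite /from_subspace /= ltr_distlC => /andP [lt_g _].
by apply: lt_le_trans (le_segment_sup i As t01); lra.
Qed.

Lemma segment_sup_continuous : {within A, continuous segment_sup}.
Proof.
apply/subspace_continuousP => s0 As0; apply/cvgrPdist_lt => e e0.
have e20 : 0 < e / 2 by rewrite divr_gt0.
apply: filterS2 (segment_sup_near_le As0 e20) (segment_sup_near_gt As0 e0).
by move=> s le_s gt_s; rewrite /from_subspace ltr_distlC gt_s /=; lra.
Qed.

End SegmentSup.

Section RealFunctions.
Variable R : realType.
Implicit Types (f : R -> R) (m x : R).

Lemma derive1n_mull m f : smooth_fun f ->
  forall k, derive1n k (fun y => m * f y) = (fun y => m * derive1n k f y).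
Proof.
move=> f_smooth; elim=> [//|k IHk]; apply/funext => y.
by rewrite /derive1n iterS -/(derive1n k _) IHk derive1Ml //; exact: f_smooth.
Qed.

Lemma smooth_fun_mull m f : smooth_fun f -> smooth_fun (fun y => m * f y).
Proof.
move=> f_smooth k x; rewrite derive1n_mull //.
exact: (derivableZ (k := m) (f_smooth k x)).
Qed.

Lemma periodic1_addn f : periodic1 f -> forall x (k : nat), f (x + k%:R) = f x.
Proof.
move=> f_per x; elim=> [|k IHk]; first by rewrite addr0.
by rewrite -natr1 addrA f_per.
Qed.

Lemma periodic1_addz f : periodic1 f -> forall x (z : int), f (x + z%:~R) = f x.
Proof.
move=> f_per x [k|k]; first by rewrite -pmulrn periodic1_addn.
by rewrite NegzE mulrNz -pmulrn -(periodic1_addn f_per _ k.+1) subrK.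
Qed.

Lemma periodic1_floor f x : periodic1 f -> f (x - (Num.floor x)%:~R) = f x.
Proof. by move=> f_per; rewrite -(periodic1_addz f_per _ (Num.floor x)) subrK. Qed.

Lemma floor_sub_itv x : 0 <= x - (Num.floor x)%:~R <= 1.
Proof.
by have := floor_itv x; rewrite intrD => /andP [? ?]; apply/andP; split; lra.
Qed.

End RealFunctions.

Section ContactDilation.
Variables (R : realType) (n : nat).
Implicit Types (L : plink R n) (m : R).

Definition contact_weight (c : 'I_3) : nat := if c == 2%:R then 2%N else 1%N.

Definition contact_dilation m L : plink R n :=
  fun i c t => m ^+ contact_weight c * L i c t.

Definition link_sqnorm L i t : R :=
  L i 0%:R t ^+ 2 + L i 1%:R t ^+ 2 + L i 2%:R t ^+ 2.

Lemma contact_dilation1 L : contact_dilation 1 L = L.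
Proof.
apply/funext => i; apply/funext => c; apply/funext => t.
by rewrite /contact_dilation expr1n mul1r.
Qed.

Lemma alpha0_vel_dilation m L i t : (forall c, derivable (L i c) t 1) ->
  alpha0_vel (contact_dilation m L) i t = m ^+ 2 * alpha0_vel L i t.
Proof.
move=> L_der; rewrite /alpha0_vel /contact_dilation /= !derive1Ml //; ring.
Qed.

Lemma transverse_dilation m L : m != 0 -> transverse_link L ->
  transverse_link (contact_dilation m L).
Proof.
move=> m_neq0 [[L_smooth [L_inj L_imm]] L_tr].
have L_der i c t : derivable (L i c) t 1 by exact: (L_smooth i c).1 0%N t.
have mX_neq0 k : m ^+ k != 0 by rewrite expf_neq0.
split; [split; [|split]|].
- move=> i c; split; first exact/smooth_fun_mull/(L_smooth i c).1.
  by move=> t; rewrite /contact_dilation (L_smooth i c).2.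
- move=> i j t u t01 u01 L_eq; apply: L_inj t01 u01 _ => c.
  by apply: (mulfI (mX_neq0 (contact_weight c))); exact: L_eq c.
- move=> i t; have [c L'_neq0] := L_imm i t; exists c.
  by rewrite /contact_dilation derive1Ml // mulf_neq0.
- by move=> i t; rewrite alpha0_vel_dilation // mulf_neq0.
Qed.

Lemma link_sqnorm_dilation m L i t : 0 <= m <= 1 ->
  link_sqnorm (contact_dilation m L) i t <= m * link_sqnorm L i t.
Proof.
move=> /andP [m0 m1]; rewrite /link_sqnorm /contact_dilation /contact_weight /=.
set a := L i 0%:R t; set b := L i 1%:R t; set c := L i 2%:R t.
have m2_le : m * m <= m by rewrite ler_piMr.
have m4_le : m * m * (m * m) <= m by nra.
have ab_le : 0 <= (m - m * m) * (a ^+ 2 + b ^+ 2).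
  by rewrite mulr_ge0 ?subr_ge0 ?addr_ge0 ?sqr_ge0.
have c_le : 0 <= (m - m * m * (m * m)) * c ^+ 2.
  by rewrite mulr_ge0 ?subr_ge0 ?sqr_ge0.
nra.
Qed.

Lemma dilation_in_ball delta m L M : 0 <= m <= 1 ->
  (forall i c, periodic1 (L i c)) ->
  (forall i t, 0 <= t <= 1 -> link_sqnorm L i t <= M) ->
  m * M <= delta ^+ 2 -> link_in_ball delta (contact_dilation m L).
Proof.
move=> m01 L_per L_le mM_le i t; apply: le_trans (link_sqnorm_dilation _ _ t m01) _.
have -> : link_sqnorm L i t = link_sqnorm L i (t - (Num.floor t)%:~R).
  by rewrite /link_sqnorm !periodic1_floor.
apply: le_trans mM_le; rewrite ler_wpM2l ?L_le ?floor_sub_itv //.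
by case/andP: m01.
Qed.

Lemma cont_family_comp (Q P : topologicalType) (A : set Q) (B : set P)
    (phi : Q -> P) (F : P -> plink R n) :
  continuous phi -> (forall q, A q -> B (phi q)) -> cont_family B F ->
  cont_family A (F \o phi).
Proof.
move=> phi_cont AB F_cont k i c.
have AXT_BXT : forall p : Q * R, (A `*` setT) p -> (B `*` setT) (phi p.1, p.2).
  by move=> [q t] [/AB].
exact: (continuous_comp_within (continuous_map_fst (T := R) phi_cont) AXT_BXT
  (F_cont k i c)).
Qed.

Lemma cont_family_dilation (P : topologicalType) (A : set P) (mu : P -> R)
    (F : P -> plink R n) :
  (forall p i c, A p -> smooth_fun (F p i c)) -> {within A, continuous mu} ->
  cont_family A F -> cont_family A (fun p => contact_dilation (mu p) (F p)).
Proof.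
move=> F_smooth mu_cont F_cont k i c.
apply: (@subspace_eq_continuous _ _ _
  (fun p => mu p.1 ^+ contact_weight c * derive1n k (F p.1 i c) p.2)).
  by move=> [p t]; rewrite inE => -[/= Ap _]; rewrite /from_subspace /contact_dilation
    /= derive1n_mull //; exact: F_smooth.
have mu1_cont : {within A `*` setT, continuous (fun p : P * R => mu p.1)}.
  exact: (continuous_comp_within (@continuous_fst _ R)
    (fun p (Ap : (A `*` setT) p) => Ap.1) mu_cont).
move=> p; apply: cvgM; last exact: (F_cont k i c).
exact: cvg_comp (mu1_cont p) (@exprn_continuous _ _ _).
Qed.

End ContactDilation.

Section ShrinkIntoBall.
Variables (R : realType) (delta : R) (d n : nat) (K : 'rV[R]_d -> plink R n).
Hypothesis delta_gt0 : 0 < delta.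
Hypothesis K_transverse : forall s, unit_ball d s -> transverse_link (K s).
Hypothesis K_cont : cont_family (unit_ball d) K.
Hypothesis K_sphere : forall s, unit_sphere d s -> link_in_ball delta (K s).

Let D := @unit_ball R d `*` (`[0, 1]%classic : set R).

Definition sqradius (s : 'rV[R]_d) : R :=
  segment_sup (fun i s t => link_sqnorm (K s) i t) s.

Lemma K_sqnorm_continuous i : {within unit_ball d `*` setT,
  continuous (fun p : 'rV[R]_d * R => link_sqnorm (K p.1) i p.2)}.
Proof.
move=> p; have Kc c : {within unit_ball d `*` setT,
    continuous (fun p : 'rV[R]_d * R => K p.1 i c p.2)} := @K_cont 0 i c.
by apply: cvgD; first apply: cvgD; exact: cvg_comp (Kc _ p) (@exprn_continuous R 2 _).
Qed.

Lemma sqradius_continuous : {within unit_ball d, continuous sqradius}.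
Proof. exact: segment_sup_continuous K_sqnorm_continuous. Qed.

Lemma sqradius_ball s : unit_ball d s ->
  forall i t, 0 <= t <= 1 -> link_sqnorm (K s) i t <= sqradius s.
Proof.
by move=> Bs i t t01; exact: (le_segment_sup K_sqnorm_continuous i Bs t01).
Qed.

Lemma sqradius_sphere s : unit_sphere d s -> sqradius s <= delta ^+ 2.
Proof.
by move=> Ss; apply: segment_sup_le => [|i t _]; [rewrite sqr_ge0 | exact: K_sphere].
Qed.

Definition shrink_ratio (s : 'rV[R]_d) : R :=
  delta ^+ 2 / Num.max (sqradius s) (delta ^+ 2).

Lemma max_sqradius_gt0 s : 0 < Num.max (sqradius s) (delta ^+ 2).
Proof. by rewrite lt_max exprn_gt0 ?orbT. Qed.

Lemma shrink_ratio_gt0 s : 0 < shrink_ratio s.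
Proof. by rewrite divr_gt0 ?exprn_gt0 ?max_sqradius_gt0. Qed.

Lemma shrink_ratio_le1 s : shrink_ratio s <= 1.
Proof. by rewrite ler_pdivrMr ?max_sqradius_gt0 // mul1r le_max lexx orbT. Qed.

Lemma shrink_ratio_sqradius s : 0 <= sqradius s ->
  shrink_ratio s * sqradius s <= delta ^+ 2.
Proof.
move=> r_ge0; rewrite mulrAC ler_pdivrMr ?max_sqradius_gt0 //.
by rewrite ler_pM2l ?exprn_gt0 // le_max lexx.
Qed.

Lemma shrink_ratio_sphere s : unit_sphere d s -> shrink_ratio s = 1.
Proof.
move=> Ss; rewrite /shrink_ratio max_r ?sqradius_sphere // divff //.
by rewrite gt_eqF ?exprn_gt0.
Qed.

Lemma shrink_ratio_continuous : {within unit_ball d, continuous shrink_ratio}.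
Proof.
move=> s; apply: cvgM; first exact: cvg_cst.
apply: cvgV; first by rewrite gt_eqF ?max_sqradius_gt0.
exact: continuous_max (@sqradius_continuous s) (cvg_cst _).
Qed.

Definition shrink_scale (p : 'rV[R]_d * R) : R := 1 - p.2 * (1 - shrink_ratio p.1).

Lemma shrink_scale_itv p : 0 <= p.2 <= 1 -> shrink_ratio p.1 <= shrink_scale p <= 1.
Proof.
move=> /andP [t0 t1]; have r0 := shrink_ratio_gt0 p.1; have r1 := shrink_ratio_le1 p.1.
have h1 : 0 <= (1 - p.2) * (1 - shrink_ratio p.1) by rewrite mulr_ge0 ?subr_ge0.
have h2 : 0 <= p.2 * (1 - shrink_ratio p.1) by rewrite mulr_ge0 ?subr_ge0.
by rewrite /shrink_scale; apply/andP; split; lra.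
Qed.

Lemma shrink_scale_gt0 p : 0 <= p.2 <= 1 -> 0 < shrink_scale p.
Proof.
by move=> /shrink_scale_itv /andP [+ _]; apply: lt_le_trans (shrink_ratio_gt0 _).
Qed.

Lemma shrink_scale_continuous : {within D, continuous shrink_scale}.
Proof.
have ratio_cont := continuous_comp_within (@continuous_fst _ R)
  (fun p (Dp : D p) => Dp.1) shrink_ratio_continuous.
move=> p; apply: cvgB; first exact: cvg_cst.
apply: cvgM; last by apply: cvgB; [exact: cvg_cst | exact: ratio_cont].
exact: (continuous_subspaceT (fun p => @cvg_snd _ _ _ _ _)).
Qed.

Definition shrinking (p : 'rV[R]_d * R) : plink R n :=
  contact_dilation (shrink_scale p) (K p.1).

Lemma shrinking_cont : cont_family D shrinking.
Proof.
apply: cont_family_dilation; last 1 first.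
- exact: (cont_family_comp (@continuous_fst _ R) (fun p (Dp : D p) => Dp.1) K_cont).
- by move=> p i c [Bs _]; have [[/(_ i c) []]] := K_transverse Bs.
- exact: shrink_scale_continuous.
Qed.

Lemma shrinking_transverse s t : unit_ball d s -> 0 <= t <= 1 ->
  transverse_link (shrinking (s, t)).
Proof.
move=> Bs t01; apply: transverse_dilation (K_transverse Bs).
by rewrite gt_eqF // shrink_scale_gt0.
Qed.

Lemma shrinking_sphere s t : unit_sphere d s -> shrinking (s, t) = K s.
Proof.
move=> Ss; rewrite /shrinking /shrink_scale /= shrink_ratio_sphere //.
by rewrite subrr mulr0 subr0 contact_dilation1.
Qed.

Lemma shrinking0 s : shrinking (s, 0) = K s.
Proof. by rewrite /shrinking /shrink_scale /= mul0r subr0 contact_dilation1. Qed.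

Lemma shrinking1_in_ball s : unit_ball d s -> link_in_ball delta (shrinking (s, 1)).
Proof.
move=> Bs; have r_ge0 : 0 <= sqradius s.
  exact: (segment_sup_ge0 K_sqnorm_continuous Bs).
have -> : shrinking (s, 1) = contact_dilation (shrink_ratio s) (K s).
  by rewrite /shrinking /shrink_scale /= mul1r opprB addrC subrK.
apply: dilation_in_ball (sqradius_ball Bs) (shrink_ratio_sqradius r_ge0).
- by rewrite ltW ?shrink_ratio_gt0 ?shrink_ratio_le1.
- by move=> i c; have [[/(_ i c) []]] := K_transverse Bs.
Qed.

End ShrinkIntoBall.

Theorem lemma3p6 (R : realType) (delta : R) (d n : nat)
    (K : 'rV[R]_d -> plink R n) :
  0 < delta ->
  (forall s, unit_ball d s -> transverse_link (K s)) ->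
  cont_family (unit_ball d) K ->
  (forall s, unit_sphere d s -> link_in_ball delta (K s)) ->
  exists H : 'rV[R]_d * R -> plink R n,
    cont_family (P := ('rV[R]_d * R)%type) (unit_ball d `*` `[0, 1]%classic) H /\
    (forall s t, unit_ball d s -> 0 <= t <= 1 -> transverse_link (H (s, t))) /\
    (forall s t, unit_sphere d s -> 0 <= t <= 1 -> H (s, t) = K s) /\
    (forall s, unit_ball d s -> H (s, 0) = K s) /\
    (forall s, unit_ball d s -> link_in_ball delta (H (s, 1))).
Proof.
move=> delta_gt0 K_transverse K_cont K_sphere.
exists (shrinking delta K); split; [|split; [|split; [|split]]].
- exact: (shrinking_cont delta_gt0 K_transverse K_cont).
- by move=> s t; exact: (shrinking_transverse delta_gt0 K_transverse).
- by move=> s t Ss _; exact: (shrinking_sphere delta_gt0 K_sphere).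
- by move=> s _; exact: shrinking0.
- by move=> s; exact: (shrinking1_in_ball delta_gt0 K_transverse K_cont).
Qed.
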